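(* Let $-\infty\le a<b\le\infty$, let $\kappa,\varphi:(a,b)\to\mathbb C$ be measurable with $\kappa\in L^2(a,b)$ and $\mathbb 1_{(a,c)}\varphi\in L^2(a,b)$ for every $c\in(a,b)$. Choose $c_0:=a<c_1<c_2<\dots<b$ with $\|\mathbb 1_{(c_n,b)}\kappa\|^2=2^{-n}\|\kappa\|^2$, and set $J_n=(c_{n-1},c_n)$, $\omega_n=\|\mathbb 1_{J_n}\kappa\|\cdot\|\mathbb 1_{J_n}\varphi\|$. Then \[ \sup_{n\in\mathbb N}\omega_n<\infty\iff\limsup_{t\nearrow b}\|\mathbb 1_{(a,t)}\varphi\|\cdot\|\mathbb 1_{(t,b)}\kappa\|<\infty . \]
   Context: Norms are $L^2(a,b)$-norms; $\mathbb 1_E$ is the indicator function of $E$. *)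

From HB Require Import structures.
From mathcomp Require Import all_boot all_order all_algebra.
From mathcomp Require Import all_classical all_reals all_analysis.
From mathcomp.real_closed Require Import complex.
Set Implicit Arguments. Unset Strict Implicit. Unset Printing Implicit Defensive.
Import Order.TTheory GRing.Theory Num.Theory.
Import numFieldTopology.Exports numFieldNormedType.Exports.
Local Open Scope classical_set_scope.
Local Open Scope ring_scope.

Definition eoo (R : realType) (x y : \bar R) : set R :=
  [set t : R | (x < t%:E)%E /\ (t%:E < y)%E].

Definition cnorm2 (R : realType) (z : R[i]) : R :=
  (complex.Re z) ^+ 2 + (complex.Im z) ^+ 2.

Definition cmeasurable (R : realType) (D : set R) (f : R -> R[i]) : Prop :=
  measurable_fun D (fun x => complex.Re (f x)) /\
  measurable_fun D (fun x => complex.Im (f x)).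

Definition L2sq (R : realType) (E : set R) (f : R -> R[i]) : \bar R :=
  (\int[lebesgue_measure]_(x in E) (cnorm2 (f x))%:E)%E.

(* ||1_E f|| (used only when L2sq E f is finite) *)
Definition L2norm (R : realType) (E : set R) (f : R -> R[i]) : R :=
  Num.sqrt (fine (L2sq E f)).

(* the filter t -> b from the left, b an extended real (b = -oo never occurs) *)
Definition at_left_e (R : realType) (b : \bar R) : set_system R :=
  match b with
  | EFin r => r^'-
  | +oo%E => +oo%R
  | -oo%E => [set: set R]
  end.

From HB Require Import structures.
From mathcomp Require Import all_boot all_order all_algebra.
From mathcomp Require Import all_classical all_reals all_analysis.
From mathcomp Require Import measurable_realfun.
From mathcomp.real_closed Require Import complex.
From mathcomp Require Import ring lra.
Import Order.TTheory GRing.Theory Num.Theory.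
Import numFieldTopology.Exports numFieldNormedType.Exports.
Local Open Scope classical_set_scope.
Local Open Scope ring_scope.

(* Write K = ‖κ‖².  The choice of the c_n gives ‖1_{J_n} κ‖² = 2^-n K = ‖1_{(c_n,b)} κ‖², so
   ω_n² ≤ ‖1_{(a,c_n)} φ‖² ‖1_{(c_n,b)} κ‖², the right-hand quantity at t = c_n.  If that
   quantity is at most B for t in (e,b), then ω_n² ≤ B when c_n > e and ω_n² ≤ ‖1_{(a,e)} φ‖² K
   otherwise.  Conversely ω_n ≤ M gives ‖1_{J_n} φ‖² K ≤ 2^n M², which sums to
   ‖1_{(a,c_n)} φ‖² K ≤ 2^(n+1) M²; for c_m ≤ t < c_(m+1) this pairs with
   ‖1_{(t,b)} κ‖² ≤ 2^-m K to bound the product by 4 M², and if t lies beyond every c_n then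
   κ vanishes on (t,b). *)

Section open_intervals.
Context {R : realType}.
Implicit Types x y z : \bar R.

Lemma measurable_eoo x y : measurable (eoo x y).
Proof.
have := @EFin_measurable R setT measurableT _ (emeasurable_itv (Interval (BRight x) (BLeft y))).
rewrite setTI; congr measurable; apply/funext => t /=.
by rewrite /eoo /= in_itv /=; apply/propext; split => [/andP[]|[->->]].
Qed.

Lemma subset_eoo x y x' y' : (x' <= x)%E -> (y <= y')%E -> eoo x y `<=` eoo x' y'.
Proof.
by move=> xx yy t [xt ty]; split; [exact: le_lt_trans xt|exact: lt_le_trans yy].
Qed.

Lemma eoo_eq0 x y : (y <= x)%E -> eoo x y = set0.
Proof.
move=> yx; apply/seteqP; split => // t [xt ty].
by have := lt_trans xt (lt_le_trans ty yx); rewrite ltxx.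
Qed.

Lemma fineK_between [x y z : \bar R] : (x < y)%E -> (y < z)%E -> (fine y)%:E = y.
Proof. by move=> xy yz; apply/fineK/(ltgte_fin_num (a := x) (b := z)); rewrite xy yz. Qed.

Lemma eoo_setD1 x y z : (x < y)%E -> (y < z)%E ->
  eoo x z `\ fine y = eoo x y `|` eoo y z.
Proof.
move=> xy yz; have yE := fineK_between xy yz.
apply/seteqP; split => t /=.
- move=> [[xt tz] /eqP]; rewrite neq_lt -!lte_fin yE.
  by move=> /orP[ty|yt]; [left|right].
- case=> -[xt ty]; split=> [|tyE].
  + by split=> //; exact: lt_trans yz.
  + by move: ty; rewrite tyE yE ltxx.
  + by split=> //; exact: lt_trans xy xt.
  + by move: xt; rewrite tyE yE ltxx.
Qed.

End open_intervals.

#[global] Hint Resolve measurable_eoo : core.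

Section square_norms.
Context {R : realType}.
Implicit Types (E F : set R) (f g : R -> R[i]).

Lemma cnorm2_ge0 (z : R[i]) : 0 <= cnorm2 z.
Proof. by rewrite /cnorm2 addr_ge0 ?sqr_ge0. Qed.

Lemma cmeasurableS [E F f] : measurable F -> E `<=` F -> cmeasurable F f -> cmeasurable E f.
Proof. by move=> mF EF [mre mim]; split; exact: measurable_funS mF EF _. Qed.

Lemma measurable_cnorm2 E f : cmeasurable E f ->
  measurable_fun E (fun t => (cnorm2 (f t))%:E).
Proof.
by move=> [mre mim]; apply/measurable_EFinP; apply: measurable_funD; exact: measurable_funX.
Qed.

Lemma L2sq_ge0 E f : (0 <= L2sq E f)%E.
Proof. by apply: integral_ge0 => t _; rewrite lee_fin cnorm2_ge0. Qed.

Lemma L2sq_set0 f : L2sq set0 f = 0%E.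
Proof. exact: integral_set0. Qed.

Lemma le_L2sq [E F f] : measurable E -> measurable F -> cmeasurable F f -> E `<=` F ->
  (L2sq E f <= L2sq F f)%E.
Proof.
move=> mE mF mf EF; apply: ge0_subset_integral => //; first exact: measurable_cnorm2.
by move=> t _; rewrite lee_fin cnorm2_ge0.
Qed.

Lemma L2sq_eoo_split [x y z : \bar R] [f] : cmeasurable (eoo x z) f ->
  (x < y)%E -> (y < z)%E -> L2sq (eoo x z) f = (L2sq (eoo x y) f + L2sq (eoo y z) f)%E.
Proof.
move=> mf xy yz; have mxyz : measurable (eoo x y `|` eoo y z).
  by apply: measurableU; exact: measurable_eoo.
have mfU : cmeasurable (eoo x y `|` eoo y z) f.
  rewrite -eoo_setD1 //; apply: cmeasurableS mf; [exact: measurable_eoo|by move=> t []].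
rewrite /L2sq -(@integral_setD1 _ _ (fine y)) eoo_setD1 //; last exact: measurable_cnorm2.
rewrite ge0_integral_setU //; try exact: measurable_eoo.
- exact: measurable_cnorm2.
- by move=> t _; rewrite lee_fin cnorm2_ge0.
- rewrite disj_set2E; apply/eqP/seteqP; split => // t [[_ ty] [yt _]].
  by have := lt_trans ty yt; rewrite ltxx.
Qed.

Lemma fine_L2sq_ge0 E f : 0 <= fine (L2sq E f).
Proof. exact/fine_ge0/L2sq_ge0. Qed.

Lemma fine_le_L2sq [E F f] : measurable E -> measurable F -> cmeasurable F f -> E `<=` F ->
  (L2sq F f < +oo)%E -> fine (L2sq E f) <= fine (L2sq F f).
Proof.
move=> mE mF mf EF Ffin; have EFle := le_L2sq mE mF mf EF.
by apply: fine_le => //; rewrite ge0_fin_numE ?L2sq_ge0 //; exact: le_lt_trans Ffin.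
Qed.

Lemma fine_L2sq_eoo_split [x y z : \bar R] [f] : cmeasurable (eoo x z) f ->
  (L2sq (eoo x z) f < +oo)%E -> (x < y)%E -> (y < z)%E ->
  fine (L2sq (eoo x z) f) = fine (L2sq (eoo x y) f) + fine (L2sq (eoo y z) f).
Proof.
move=> mf fin xy yz; rewrite (L2sq_eoo_split mf xy yz) in fin *.
have : (L2sq (eoo x y) f + L2sq (eoo y z) f)%E \is a fin_num.
  by rewrite ge0_fin_numE // adde_ge0 ?L2sq_ge0.
by rewrite fin_numD => /andP[xyfin yzfin]; rewrite fineD.
Qed.

Lemma L2normM E F f g :
  L2norm E f * L2norm F g = Num.sqrt (fine (L2sq E f) * fine (L2sq F g)).
Proof. by rewrite sqrtrM ?fine_L2sq_ge0. Qed.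

End square_norms.

Section left_limits.
Context {R : realType}.

Lemma limf_esup_lty {T : choiceType} {X : filteredType T} (g : X -> R) (F : set_system X) :
  Filter F ->
  (limf_esup (fun t => (g t)%:E) F < +oo)%E <-> exists M, \forall t \near F, g t <= M.
Proof.
move=> FF; rewrite limf_esupE; split.
- move=> /ereal_inf_lt [_ [V FV <-] supV].
  suff [M VM] : exists M, forall t, V t -> g t <= M by exists M; exact: filterS FV.
  have gV t : V t -> ((g t)%:E <= ereal_sup [set (g t)%:E | t in V])%E.
    by move=> Vt; apply: ereal_sup_ubound; exists t.
  case: (ereal_sup _) gV supV => [r| |] // gV _.
  + by exists r => t /gV.
  + by exists 0 => t /gV; rewrite leeNy_eq.
- move=> [M FM]; apply: (@le_lt_trans _ _ M%:E); last exact: ltry.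
  apply: (@le_trans _ _ (ereal_sup [set (g t)%:E | t in [set t | g t <= M]])).
    by apply: ereal_inf_lbound; exists [set t | g t <= M].
  by apply: ge_ereal_sup => _ [t /= gtM <-]; rewrite lee_fin.
Qed.

#[global] Instance at_left_e_filter (b : \bar R) : Filter (at_left_e b).
Proof. by case: b => [r||] /=; try exact: _; constructor. Qed.

Lemma at_left_e_eoo (a b : \bar R) : (a < b)%E -> at_left_e b (eoo a b).
Proof.
case: b => [r| |] //= ab.
- case: a ab => [a0| |] //= ab.
  + near=> t; split; rewrite lte_fin; near: t; [exact: nbhs_left_gt|exact: nbhs_left_lt].
  + near=> t; split; first exact: ltNyr. rewrite lte_fin; near: t; exact: nbhs_left_lt.
- case: a ab => [a0| |] //= ab.
  + by exists a0; split => // t a0t; split; [rewrite lte_fin|exact: ltry].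
  + by exists 0%R; split => // t _; split; [exact: ltNyr|exact: ltry].
Unshelve. all: by end_near. Qed.

Lemma at_left_e_oo [b : \bar R] [P : set R] : (-oo < b)%E -> at_left_e b P ->
  exists2 e : R, (e%:E < b)%E & eoo e%:E b `<=` P.
Proof.
case: b => [r| |] //= _.
- move=> /nbhs_ballP[e /= e0 reP]; exists (r - e); first by rewrite lte_fin gtrBl.
  move=> t [ret tr]; rewrite !lte_fin in ret tr; apply: reP => //.
  by rewrite /ball /= ger0_norm ?subr_ge0 ?ltW // ltrBlDr addrC -ltrBlDr.
- by move=> [M [_ MP]]; exists M => [|t [Mt _]]; [exact: ltry|apply: MP; rewrite -lte_fin].
Qed.

Lemma le0_le_geometric_halves (x K : R) : (forall n, x <= 2 ^- n * K) -> x <= 0.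
Proof.
move=> xle; have cvg0 : (fun n => 2 ^- n * K) @ \oo --> 0.
  have -> : (fun n => 2 ^- n * K) = geometric K 2^-1 by apply/funext => n; rewrite /= exprVn mulrC.
  by apply: cvg_geometric; rewrite ger0_norm // invf_lt1 // ltr1n.
by rewrite -(cvg_lim _ cvg0) //; apply: limr_ge; [exact: cvgP cvg0|exact: nearW].
Qed.

End left_limits.

Lemma sqrtr_le_sqr (R : rcfType) (x M : R) : Num.sqrt x <= M -> x <= M ^+ 2.
Proof.
have [x0 sxM|/ltW x0 _] := leP 0 x; last exact: le_trans x0 (sqr_ge0 M).
by rewrite -(sqr_sqrtr x0) lerXn2r // ?nnegrE ?sqrtr_ge0 //; exact: le_trans sxM.
Qed.

Section lemma5p3.
Variables (R : realType) (a b : \bar R) (kappa phi : R -> R[i]) (c : nat -> \bar R).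
Hypotheses (ab : (a < b)%E) (mkappa : cmeasurable (eoo a b) kappa)
  (mphi : cmeasurable (eoo a b) phi) (kappa_fin : (L2sq (eoo a b) kappa < +oo)%E)
  (phi_fin : forall t : R, (a < t%:E)%E -> (t%:E < b)%E -> (L2sq (eoo a t%:E) phi < +oo)%E)
  (c0 : c 0%N = a) (c_lt_succ : forall n, (c n < c n.+1)%E) (c_lt_b : forall n, (c n < b)%E)
  (kappa_tail : forall n,
    L2sq (eoo (c n) b) kappa = ((2 ^- n)%:E * L2sq (eoo a b) kappa)%E).

Local Notation kappa2 x y := (fine (L2sq (eoo x y) kappa)).
Local Notation phi2 x y := (fine (L2sq (eoo x y) phi)).
Let K := kappa2 a b.
Let omega n := L2norm (eoo (c n.-1) (c n)) kappa * L2norm (eoo (c n.-1) (c n)) phi.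
Let phi_kappa_prod (t : R) := L2norm (eoo a t%:E) phi * L2norm (eoo t%:E b) kappa.

Lemma a_le_c n : (a <= c n)%E.
Proof. by elim: n => [|n IH]; [rewrite c0|exact: le_trans IH (ltW (c_lt_succ n))]. Qed.

Lemma a_lt_c n : (0 < n)%N -> (a < c n)%E.
Proof. by case: n => // n _; exact: le_lt_trans (a_le_c n) (c_lt_succ n). Qed.

Lemma cmeasurable_subeoo [f x y] : cmeasurable (eoo a b) f -> (a <= x)%E -> (y <= b)%E ->
  cmeasurable (eoo x y) f.
Proof. by move=> mf ax yb; apply: cmeasurableS mf; [exact: measurable_eoo|exact: subset_eoo]. Qed.

Lemma L2sq_kappa_lty x y : (a <= x)%E -> (y <= b)%E -> (L2sq (eoo x y) kappa < +oo)%E.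
Proof.
move=> ax yb; apply: le_lt_trans kappa_fin.
by apply: le_L2sq => //; exact: subset_eoo.
Qed.

Lemma L2sq_phi_lty x y : (a <= x)%E -> (y < b)%E -> (L2sq (eoo x y) phi < +oo)%E.
Proof.
move=> ax yb; have [ay|ya] := ltP a y; last first.
  by rewrite eoo_eq0 ?L2sq_set0 ?ltry //; exact: le_trans ya ax.
have yE := fineK_between ay yb; rewrite -yE in ay yb *.
apply: le_lt_trans (phi_fin _ ay yb); apply: le_L2sq => //.
- exact: cmeasurable_subeoo mphi (lexx a) (ltW yb).
- exact: subset_eoo.
Qed.

Lemma kappa2_le x y x' y' : (a <= x')%E -> (x' <= x)%E -> (y <= y')%E -> (y' <= b)%E ->
  kappa2 x y <= kappa2 x' y'.
Proof.
move=> ax' x'x yy' y'b; apply: fine_le_L2sq => //.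
- exact: cmeasurable_subeoo.
- exact: subset_eoo.
- exact: L2sq_kappa_lty.
Qed.

Lemma phi2_le x y x' y' : (a <= x')%E -> (x' <= x)%E -> (y <= y')%E -> (y' < b)%E ->
  phi2 x y <= phi2 x' y'.
Proof.
move=> ax' x'x yy' y'b; apply: fine_le_L2sq => //.
- exact: cmeasurable_subeoo (ltW y'b).
- exact: subset_eoo.
- exact: L2sq_phi_lty.
Qed.

Lemma kappa2_tail n : kappa2 (c n) b = 2 ^- n * K.
Proof. by rewrite kappa_tail fineM // ge0_fin_numE ?L2sq_ge0. Qed.

Lemma kappa2_J n : (0 < n)%N -> kappa2 (c n.-1) (c n) = 2 ^- n * K.
Proof.
case: n => // n _ /=; have := kappa2_tail n.
rewrite (fine_L2sq_eoo_split _ _ (c_lt_succ n) (c_lt_b n.+1)).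
- rewrite kappa2_tail exprS invfM; lra.
- exact: cmeasurable_subeoo mkappa (a_le_c n) (lexx b).
- exact: L2sq_kappa_lty (a_le_c n) (lexx b).
Qed.

Lemma kappa2_tail_le [n t] : (c n <= t%:E)%E -> (t%:E <= b)%E -> kappa2 t%:E b <= 2 ^- n * K.
Proof. by move=> cnt tb; rewrite -kappa2_tail; apply: kappa2_le => //; exact: a_le_c. Qed.

Lemma phi2_c_succ n : phi2 a (c n.+1) = phi2 a (c n) + phi2 (c n) (c n.+1).
Proof.
(* c 0 = a may be -oo, so for n = 0 there is no point to split at. *)
case: n => [|n]; first by rewrite c0 [eoo a a]eoo_eq0 // L2sq_set0 add0r.
rewrite (fine_L2sq_eoo_split _ _ (a_lt_c n.+1 isT) (c_lt_succ n.+1)) //.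
- exact: cmeasurable_subeoo mphi (lexx a) (ltW (c_lt_b _)).
- exact: L2sq_phi_lty (lexx a) (c_lt_b _).
Qed.

Section omega_bounded.
Variable B : R.
Hypothesis omega2_le :
  forall n, (0 < n)%N -> kappa2 (c n.-1) (c n) * phi2 (c n.-1) (c n) <= B.

Lemma omega_bound_ge0 : 0 <= B.
Proof. by apply: le_trans (omega2_le 1 isT); rewrite mulr_ge0 ?fine_L2sq_ge0. Qed.

Lemma phi2_J_mulK_le n : (0 < n)%N -> phi2 (c n.-1) (c n) * K <= 2 ^+ n * B.
Proof.
move=> n0; have := omega2_le n n0; rewrite kappa2_J // => omega2_le_n.
have -> : phi2 (c n.-1) (c n) * K = 2 ^+ n * (2 ^- n * K * phi2 (c n.-1) (c n)).
  by rewrite mulrA mulVKf ?expf_neq0 // mulrC.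
by apply: ler_wpM2l omega2_le_n; rewrite exprn_ge0.
Qed.

Lemma phi2_c_mulK_le n : phi2 a (c n) * K <= 2 ^+ n.+1 * B.
Proof.
elim: n => [|n IH].
  by rewrite c0 eoo_eq0 // L2sq_set0 mul0r mulr_ge0 ?omega_bound_ge0.
have -> : 2 ^+ n.+2 * B = 2 ^+ n.+1 * B + 2 ^+ n.+1 * B by rewrite exprS; ring.
by rewrite phi2_c_succ mulrDl lerD // (phi2_J_mulK_le n.+1).
Qed.

Lemma phi2_kappa2_le t : (a < t%:E)%E -> (t%:E < b)%E -> phi2 a t%:E * kappa2 t%:E b <= 4 * B.
Proof.
move=> a_t tb; have [tc_ex|c_le_t] := pselect (exists n, (t%:E < c n)%E); last first.
  have kappa2_le0 : kappa2 t%:E b <= 0.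
    apply: (@le0_le_geometric_halves _ _ K) => n; apply: kappa2_tail_le (ltW tb).
    by rewrite leNgt; apply/negP => tcn; apply: c_le_t; exists n.
  rewrite (le_trans (ler_wpM2l (fine_L2sq_ge0 _ _) kappa2_le0)) //.
  by rewrite mulr0 mulr_ge0 // omega_bound_ge0.
have [[|m] tcm m_min] := ex_minnP tc_ex.
  by move: (lt_trans a_t tcm); rewrite c0 ltxx.
have cmt : (c m <= t%:E)%E by rewrite leNgt; apply/negP => /m_min; rewrite ltnn.
have phi2_le_c : phi2 a t%:E <= phi2 a (c m.+1).
  exact: phi2_le (lexx a) (lexx a) (ltW tcm) (c_lt_b _).
apply: le_trans (ler_pM (fine_L2sq_ge0 _ _) (fine_L2sq_ge0 _ _) phi2_le_c
  (kappa2_tail_le cmt (ltW tb))) _.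
have -> : 4 * B = 2 ^- m * (2 ^+ m.+2 * B) by rewrite !exprS; field; exact: expf_neq0.
by rewrite mulrCA ler_wpM2l ?invr_ge0 ?exprn_ge0 // phi2_c_mulK_le.
Qed.

End omega_bounded.

Lemma omega2_bounded (e B : R) : (e%:E < b)%E ->
  (forall t, eoo e%:E b t -> phi2 a t%:E * kappa2 t%:E b <= B) ->
  exists B', forall n, (0 < n)%N -> kappa2 (c n.-1) (c n) * phi2 (c n.-1) (c n) <= B'.
Proof.
move=> eb eB; exists (Num.max B (phi2 a e%:E * K)) => n n0.
rewrite kappa2_J // -kappa2_tail mulrC.
have phi2_J_le : phi2 (c n.-1) (c n) <= phi2 a (c n).
  exact: phi2_le (lexx a) (a_le_c _) (lexx _) (c_lt_b n).
apply: le_trans (ler_wpM2r (fine_L2sq_ge0 _ _) phi2_J_le) _.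
have cnE := fineK_between (a_lt_c n n0) (c_lt_b n).
rewrite le_max; have [ecn|cne] := ltP e (fine (c n)).
- by apply/orP; left; rewrite -cnE; apply: eB; split; [rewrite lte_fin|rewrite cnE].
- apply/orP; right; apply: ler_pM; rewrite ?fine_L2sq_ge0 //.
  + by apply: phi2_le (lexx a) (lexx a) _ eb; rewrite -cnE lee_fin.
  + exact: kappa2_le (lexx a) (a_le_c n) (lexx b) (lexx b).
Qed.

Lemma omegaE n : omega n = Num.sqrt (kappa2 (c n.-1) (c n) * phi2 (c n.-1) (c n)).
Proof. exact: L2normM. Qed.

Lemma limf_esup_lty_of_omega_bounded : (exists M, forall n, (0 < n)%N -> omega n <= M) ->
  (limf_esup (fun t => (phi_kappa_prod t)%:E) (at_left_e b) < +oo)%E.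
Proof.
case=> M omega_le; apply/limf_esup_lty; exists (Num.sqrt (4 * M ^+ 2)).
near=> t; have [a_t tb] : eoo a b t by near: t; exact: at_left_e_eoo.
rewrite /phi_kappa_prod L2normM; apply: ler_wsqrtr; apply: phi2_kappa2_le => // n n0.
by apply: sqrtr_le_sqr; rewrite -omegaE omega_le.
Unshelve. all: by end_near. Qed.

Lemma omega_bounded_of_limf_esup_lty :
  (limf_esup (fun t => (phi_kappa_prod t)%:E) (at_left_e b) < +oo)%E ->
  exists M, forall n, (0 < n)%N -> omega n <= M.
Proof.
move=> /limf_esup_lty [M near_M].
have [e eb eM] := at_left_e_oo (le_lt_trans (leNye a) ab) near_M.
have [|B omega2_le] := omega2_bounded e (M ^+ 2) eb.
  by move=> t /eM; rewrite /phi_kappa_prod L2normM; exact: sqrtr_le_sqr.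
by exists (Num.sqrt B) => n n0; rewrite omegaE ler_wsqrtr // omega2_le.
Qed.

End lemma5p3.

Theorem lemma5p3 (R : realType) (a b : \bar R) (kappa phi : R -> R[i])
  (c : nat -> \bar R) :
  (a < b)%E ->
  cmeasurable (eoo a b) kappa ->
  cmeasurable (eoo a b) phi ->
  (L2sq (eoo a b) kappa < +oo)%E ->
  (forall t : R, (a < t%:E)%E -> (t%:E < b)%E -> (L2sq (eoo a t%:E) phi < +oo)%E) ->
  c 0%N = a ->
  (forall n, (c n < c n.+1)%E) ->
  (forall n, (c n < b)%E) ->
  (forall n, L2sq (eoo (c n) b) kappa = ((2 ^- n)%:E * L2sq (eoo a b) kappa)%E) ->
  let omega (n : nat) := L2norm (eoo (c n.-1) (c n)) kappa
                         * L2norm (eoo (c n.-1) (c n)) phi in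
  (exists M : R, forall n : nat, (0 < n)%N -> omega n <= M) <->
  (limf_esup (fun t : R => (L2norm (eoo a t%:E) phi * L2norm (eoo t%:E b) kappa)%:E)
             (at_left_e b) < +oo)%E.
Proof.
move=> ab mkappa mphi kappa_fin phi_fin c0 c_lt_succ c_lt_b kappa_tail omega.
split; [exact: limf_esup_lty_of_omega_bounded|exact: omega_bounded_of_limf_esup_lty].
Qed.
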